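(* Let $\mathcal{V}$ be the set of sequences $v=(v_j)_{j\in\mathbb{Z}_+}$ in $[1,\infty)$ with $v_0=1$ and $v_n\ge\sum_{j<n}v_j$ for all $n\in\mathbb{N}$, and for $v\in\mathcal{V}$ and $n\in\mathbb{N}$ put $u_n=v_n-\sum_{j<n}v_j$. For each $v\in\mathcal{V}$ there is exactly one hermitian hypergroup deformation $(\mathbb{Z}_+,* )$ of $(\mathbb{Z}_+,<,\max)$ satisfying $(\delta_n*\delta_n)(0)=1/v_n$ for all $n\in\mathbb{Z}_+$. Moreover, for this deformation, writing $\mathcal{L}_n=\{k\in\mathbb{Z}_+:k<n\}$ and $\lambda$ for its Haar measure: (i) $\lambda(n)=v_n$ for $n\in\mathbb{Z}_+$ and $\lambda(n)-\lambda(\mathcal{L}_n)=u_n$ for $n\in\mathbb{N}$; (ii) $\lambda(\mathcal{L}_n)\le\lambda(n)$ for $n\in\mathbb{N}$; (iii) for $n\in\mathbb{N}$: (a) $(\delta_n*\delta_n)(m)=\lambda(m)/\lambda(n)$ for $m<n$; (b) $(\delta_n*\delta_n)(n)=(\lambda(n)-\lambda(\mathcal{L}_n))/\lambda(n)$; (c) $(\delta_n*\delta_n)(m)=0$ for $m>n$; (iv) for $n\in\mathbb{N}$, $\operatorname{spt}(\delta_n*\delta_n)=\mathcal{L}_n$ if $\lambda(n)=\lambda(\mathcal{L}_n)$, and $\operatorname{spt}(\delta_n*\delta_n)=\mathcal{L}_n\cup\{n\}$ if $\lambda(n)>\lambda(\mathcal{L}_n)$.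
   Context: $\mathbb{Z}_+=\{0,1,2,\dots\}$, $\mathbb{N}=\{1,2,\dots\}$. A hermitian hypergroup deformation of $(\mathbb{Z}_+,<,\max)$ means a convolution $*$ on $\mathbb{Z}_+$ (discrete topology) given on point masses by $\delta_m*\delta_n=\delta_{\max\{m,n\}}$ for $m\ne n$ or $m=n=0$, and $\delta_n*\delta_n=q_n$ for $n\ge1$, where $q_n$ is a probability measure with finite support containing $0$, such that $(\mathbb{Z}_+,* )$ is a hermitian discrete hypergroup: $*$ is associative, $0$ is an identity, $\delta_m*\delta_n=\delta_n*\delta_m$, and $0\in\operatorname{spt}(\delta_m*\delta_n)$ iff $m=n$. For a measure $\mu$, $\mu(j)=\mu(\{j\})$. The Haar measure $\lambda$ of such a hermitian discrete hypergroup is normalized by $\lambda(0)=1$; it is given by $\lambda(n)=1/(\delta_n*\delta_n)(0)$ for $n\ne 0$, and $\lambda(A)=\sum_{j\in A}\lambda(j)$. *)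

From mathcomp Require Import all_boot all_order all_algebra.
From mathcomp Require Import reals.
Set Implicit Arguments. Unset Strict Implicit. Unset Printing Implicit Defensive.
Import Order.TTheory GRing.Theory Num.Theory.
Local Open Scope ring_scope.

Section Defs.
Variable R : realType.

(* measures on Z_+ (discrete) are functions nat -> R; mu j = mu({j}) *)
Definition dirac (k : nat) : nat -> R := fun j => (j == k)%:R.

Definition spt (mu : nat -> R) : pred nat := fun j => mu j != 0.

Definition prob_fin (mu : nat -> R) : Prop :=
  (forall j, 0 <= mu j) /\
  exists N : nat, (forall j, (N <= j)%N -> mu j = 0) /\ \sum_(j < N) mu j = 1.

(* the deformation of (Z_+,<,max) determined by the family q (q n = delta_n * delta_n
   for n >= 1; q 0 is irrelevant):  deform_conv q m n = delta_m * delta_n *)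
Definition deform_conv (q : nat -> nat -> R) (m n : nat) : nat -> R :=
  if (m != n) || (m == 0)%N then dirac (maxn m n) else q m.

(* (Z_+, * ) is a hermitian discrete hypergroup, where * is given on point masses by
   deform_conv q (and extended bilinearly) *)
Definition hermitian_hypergroup_deformation (q : nat -> nat -> R) : Prop :=
      (forall n, (0 < n)%N -> prob_fin (q n) /\ (0%N \in spt (q n))) /\
      (forall m n, prob_fin (deform_conv q m n)) /\
      (* associativity (on point masses; sums are over a common bound N of the
         supports, beyond which all terms vanish) *)
      (forall a b c (N : nat),
          (forall j, (N <= j)%N -> deform_conv q a b j = 0 /\ deform_conv q b c j = 0) ->
          forall k, \sum_(j < N) deform_conv q a b j * deform_conv q j c k
                  = \sum_(j < N) deform_conv q b c j * deform_conv q a j k) /\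
      (forall n, deform_conv q 0 n = dirac n /\ deform_conv q n 0 = dirac n) /\
      (forall m n, deform_conv q m n = deform_conv q n m) /\
      (forall m n, (0%N \in spt (deform_conv q m n)) = (m == n)).

(* Haar measure normalized by lambda(0) = 1: lambda(n) = 1/(delta_n*delta_n)(0) *)
Definition haar (q : nat -> nat -> R) (n : nat) : R :=
  if n == 0%N then 1 else (deform_conv q n n 0%N)^-1.

Definition haarL (q : nat -> nat -> R) (n : nat) : R := \sum_(k < n) haar q k.

Definition in_V (v : nat -> R) : Prop :=
  [/\ v 0%N = 1, (forall j, 1 <= v j) &
      (forall n, (0 < n)%N -> \sum_(j < n) v j <= v n)].

Definition u_of (v : nat -> R) (n : nat) : R := v n - \sum_(j < n) v j.

End Defs.

(* Apart from the diagonal ones, all products δ_m * δ_n are point masses, so for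
   q_n = (v restricted to L_n + u_n δ_n) / v_n associativity reduces to
   (δ_n * δ_n) * δ_c = δ_n * δ_(max n c), i.e. to the invariance
   Σ_(j<n) v_j (δ_j * δ_c) = v restricted to L_n for c < n, proved by induction on n.
   Conversely, evaluating (δ_n * δ_n) * δ_k = δ_n * (δ_n * δ_k) at 0, the hermitian
   property leaves q_n(k) / v_k = [k < n] / v_n for k <> n, and q_n(n) is then forced
   by the total mass 1. *)
From mathcomp Require Import all_boot all_order all_algebra.
From mathcomp Require Import reals.
From mathcomp Require Import ring zify.
Set Implicit Arguments. Unset Strict Implicit. Unset Printing Implicit Defensive.
Import Order.TTheory GRing.Theory Num.Theory.
Local Open Scope ring_scope.

Section DeformConv.
Variable R : realType.
Implicit Types (q : nat -> nat -> R) (f : nat -> R).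

Lemma sum_ord_vanishing f M N :
  (forall j, (M <= j)%N -> f j = 0) -> (forall j, (N <= j)%N -> f j = 0) ->
  \sum_(j < N) f j = \sum_(j < M) f j.
Proof.
wlog MN : M N / (M <= N)%N => [wlog_le fM fN|fM _].
  by case: (leqP M N) => [|/ltnW] le; [|symmetry]; apply: wlog_le.
rewrite (big_ord_widen _ _ MN) [RHS]big_mkcond /=.
by apply: eq_bigr => j _; case: ltnP => // /fM ->.
Qed.

Lemma sum_dirac_mul f d N : (d < N)%N -> \sum_(j < N) dirac R d j * f j = f d.
Proof.
move=> dN; rewrite (bigD1 (Ordinal dN)) //= /dirac eqxx mul1r big1 ?addr0 //.
by move=> j; rewrite -val_eqE /= => /negbTE ->; rewrite mul0r.
Qed.

Lemma dirac_vanishing_lt d N : (forall j, (N <= j)%N -> dirac R d j = 0) -> (d < N)%N.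
Proof. by move=> dN; rewrite ltnNge; apply/negP => /dN /eqP; rewrite /dirac eqxx oner_eq0. Qed.

Lemma dirac_prob d : prob_fin (dirac R d).
Proof.
split=> [j|]; first by rewrite /dirac ler0n.
exists d.+1; split=> [j dj|]; first by rewrite /dirac gtn_eqF.
rewrite -[RHS](@sum_dirac_mul (fun=> 1) d d.+1 (ltnSn d)).
by apply: eq_bigr => j _; rewrite mulr1.
Qed.

Lemma deform_conv_neq q m n : m != n -> deform_conv q m n = dirac R (maxn m n).
Proof. by rewrite /deform_conv => ->. Qed.

Lemma deform_conv_diag q n : (0 < n)%N -> deform_conv q n n = q n.
Proof. by rewrite /deform_conv eqxx; case: n. Qed.

Lemma sum_deform_conv_neq q m n f N : m != n ->
  (forall j, (N <= j)%N -> deform_conv q m n j = 0) ->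
  \sum_(j < N) deform_conv q m n j * f j = f (maxn m n).
Proof.
move=> mn; rewrite deform_conv_neq // => /dirac_vanishing_lt.
exact: sum_dirac_mul.
Qed.

End DeformConv.

Section SquareMeasure.
Variable R : realType.
Variable v : nat -> R.
Hypothesis hv : in_V v.

Definition q_of (n k : nat) : R :=
  if (k < n)%N then v k / v n else if k == n then u_of v n / v n else 0.

Lemma v0 : v 0%N = 1. Proof. by case: hv. Qed.

Lemma v_gt0 j : 0 < v j.
Proof. by case: hv => _ v_ge1 _; apply: lt_le_trans (v_ge1 j). Qed.

Lemma v_neq0 j : v j != 0.
Proof. by rewrite gt_eqF ?v_gt0. Qed.

Lemma u_of0 : u_of v 0%N = 1.
Proof. by rewrite /u_of big_ord0 subr0 v0. Qed.

Lemma u_of_ge0 n : 0 <= u_of v n.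
Proof.
case: n => [|n]; first by rewrite u_of0.
by case: hv => _ _ /(_ n.+1 isT); rewrite /u_of subr_ge0.
Qed.

Lemma q_of_lt n k : (k < n)%N -> q_of n k = v k / v n.
Proof. by rewrite /q_of => ->. Qed.

Lemma q_of_nn n : q_of n n = u_of v n / v n.
Proof. by rewrite /q_of ltnn eqxx. Qed.

Lemma q_of_gt n k : (n < k)%N -> q_of n k = 0.
Proof. by move=> nk; rewrite /q_of ltnNge ltnW //= gtn_eqF. Qed.

Lemma q_of0 : q_of 0%N = dirac R 0%N.
Proof.
by apply: boolp.funext => -[|k]; rewrite ?q_of_nn ?q_of_gt // u_of0 v0 divr1.
Qed.

Lemma sum_q_of n : \sum_(j < n.+1) q_of n j = 1.
Proof.
rewrite big_ord_recr /= q_of_nn (eq_bigr (fun j : 'I_n => v j / v n)) => [|j _]; last first.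
  by rewrite q_of_lt.
by rewrite -mulr_suml /u_of; field; apply: v_neq0.
Qed.

Lemma q_of_prob n : prob_fin (q_of n).
Proof.
split=> [j|]; last by exists n.+1; split; [move=> j; apply: q_of_gt | apply: sum_q_of].
rewrite /q_of; case: ifP => _; first by rewrite divr_ge0 // ltW ?v_gt0.
by case: ifP => _ //; rewrite divr_ge0 ?u_of_ge0 // ltW ?v_gt0.
Qed.

Lemma q_of_n0_neq0 n : (0 < n)%N -> q_of n 0%N != 0.
Proof. by move=> n_gt0; rewrite q_of_lt // mulf_neq0 ?invr_eq0 ?v_neq0. Qed.

Lemma spt_q_of n :
  spt (q_of n) =i [pred k | (k < n)%N || (k == n) && (u_of v n != 0)].
Proof.
move=> k; rewrite unfold_in inE; case: (ltngtP k n) => [kn|nk|->] /=.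
- by rewrite q_of_lt // mulf_neq0 ?invr_eq0 ?v_neq0.
- by rewrite q_of_gt ?eqxx.
- by rewrite q_of_nn mulf_eq0 invr_eq0 (negbTE (v_neq0 n)) orbF.
Qed.

Lemma deform_conv_q_ofE m n :
  deform_conv q_of m n = if m == n then q_of m else dirac R (maxn m n).
Proof.
case: (eqVneq m n) => [<-|]; last exact: deform_conv_neq.
by case: m => [|m]; [rewrite /deform_conv q_of0 | apply: deform_conv_diag].
Qed.

Lemma deform_conv_q_of_nn n : deform_conv q_of n n = q_of n.
Proof. by rewrite deform_conv_q_ofE eqxx. Qed.

Lemma deform_conv_q_ofC m n : deform_conv q_of m n = deform_conv q_of n m.
Proof. by rewrite !deform_conv_q_ofE eq_sym maxnC; case: eqP => // ->. Qed.

Lemma deform_conv_q_of_lt j c : (j < c)%N -> deform_conv q_of j c = dirac R c.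
Proof. by move=> jc; rewrite deform_conv_q_ofE ltn_eqF // (maxn_idPr (ltnW jc)). Qed.

Lemma sum_v_deform_conv n c k : (c < n)%N ->
  \sum_(j < n) v j * deform_conv q_of j c k = (k < n)%:R * v k.
Proof.
elim: n => // n IHn; rewrite ltnS leq_eqVlt big_ord_recr /= => /predU1P[->|cn].
  rewrite (eq_bigr (fun j : 'I_n => v j * dirac R n k)) => [|j _]; last first.
    by rewrite deform_conv_q_of_lt.
  rewrite -mulr_suml deform_conv_q_ofE eqxx /dirac /q_of /u_of ltnS.
  by have := v_neq0 n; case: (ltngtP k n) => [kn|nk|->] vn /=;
    rewrite ?ltnW ?leqNgt ?nk //=; field.
rewrite IHn // deform_conv_q_ofC deform_conv_q_of_lt // /dirac ltnS.
by case: (ltngtP k n) => [kn|nk|->]; rewrite /= ?ltnW ?leqNgt ?nk ?ltnn ?leqnn //=; ring.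
Qed.

Lemma sum_q_of_deform_conv n c k N : c != n -> (forall j, (N <= j)%N -> q_of n j = 0) ->
  \sum_(j < N) q_of n j * deform_conv q_of j c k = deform_conv q_of n (maxn n c) k.
Proof.
move=> cn qN; have vn := v_neq0 n.
rewrite (@sum_ord_vanishing _ (fun j => q_of n j * deform_conv q_of j c k) n.+1)
  => [|j /q_of_gt->|j /qN->]; rewrite ?mul0r //.
rewrite big_ord_recr /= q_of_nn.
rewrite (eq_bigr (fun j : 'I_n => v j * deform_conv q_of j c k / v n)) => [|j _]; last first.
  by rewrite q_of_lt // mulrAC.
rewrite -mulr_suml; case: (ltngtP c n) cn => // [cn _|nc _].
  rewrite sum_v_deform_conv // deform_conv_q_ofC deform_conv_q_of_lt //.
  rewrite deform_conv_q_ofE eqxx /q_of /dirac.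
  by case: (ltngtP k n) => [kn|nk|->] /=; field.
rewrite deform_conv_q_of_lt //.
rewrite (eq_bigr (fun j : 'I_n => v j * dirac R c k)) => [|j _]; last first.
  by rewrite deform_conv_q_of_lt // (ltn_trans _ nc).
by rewrite -mulr_suml /u_of; field.
Qed.

Lemma deform_conv_q_of_maxnA a b c : a != b -> b != c ->
  deform_conv q_of (maxn a b) c = deform_conv q_of a (maxn b c).
Proof.
move=> ab bc; rewrite !deform_conv_q_ofE maxnA.
have -> : (maxn a b == c) = (a == maxn b c) by lia.
by case: ifP => // /eqP abc; congr q_of; lia.
Qed.

Lemma q_of_assoc a b c N :
  (forall j, (N <= j)%N -> deform_conv q_of a b j = 0 /\ deform_conv q_of b c j = 0) ->
  forall k, \sum_(j < N) deform_conv q_of a b j * deform_conv q_of j c k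
          = \sum_(j < N) deform_conv q_of b c j * deform_conv q_of a j k.
Proof.
move=> abcN k.
have abN j : (N <= j)%N -> deform_conv q_of a b j = 0 by case/abcN.
have {abcN} bcN j : (N <= j)%N -> deform_conv q_of b c j = 0 by case/abcN.
case: (eqVneq a b) => [ab|ab]; case: (eqVneq b c) => [bc|bc]; subst.
- by apply: eq_bigr => j _; rewrite deform_conv_q_ofC.
- rewrite (sum_deform_conv_neq (deform_conv q_of b ^~ k)) //.
  by rewrite deform_conv_q_of_nn in abN *; rewrite sum_q_of_deform_conv // eq_sym.
- rewrite (sum_deform_conv_neq (deform_conv q_of ^~ c ^~ k)) //.
  rewrite deform_conv_q_of_nn in bcN *; under eq_bigr do rewrite deform_conv_q_ofC.
  by rewrite sum_q_of_deform_conv // deform_conv_q_ofC maxnC.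
- rewrite (sum_deform_conv_neq (deform_conv q_of ^~ c ^~ k)) //.
  by rewrite (sum_deform_conv_neq (deform_conv q_of a ^~ k)) // deform_conv_q_of_maxnA.
Qed.

Lemma q_of_hypergroup : hermitian_hypergroup_deformation q_of.
Proof.
split=> [n n_gt0|]; first by split; [exact: q_of_prob | rewrite unfold_in q_of_n0_neq0].
split=> [m n|].
  by rewrite deform_conv_q_ofE; case: ifP => _; [exact: q_of_prob | exact: dirac_prob].
split; first exact: q_of_assoc.
split=> [n|].
  by case: n => [|n]; rewrite !deform_conv_q_ofE /= ?q_of0 ?max0n ?maxn0.
split; first exact: deform_conv_q_ofC.
move=> m n; rewrite unfold_in deform_conv_q_ofE; case: (eqVneq m n) => [->|mn].
  by case: n => [|n]; rewrite ?q_of0 /dirac ?oner_eq0 // q_of_n0_neq0.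
by rewrite /dirac (_ : (0 == maxn m n) = false) ?eqxx //; lia.
Qed.

Lemma deform_conv_q_of_nn0 n : deform_conv q_of n n 0%N = (v n)^-1.
Proof.
rewrite deform_conv_q_of_nn; case: n => [|n]; last by rewrite q_of_lt // v0 mul1r.
by rewrite q_of0 v0 invr1.
Qed.

Lemma haar_q_of n : haar q_of n = v n.
Proof. by rewrite /haar deform_conv_q_of_nn0 invrK; case: eqP => // ->; rewrite v0. Qed.

Lemma haarL_q_of n : haarL q_of n = \sum_(k < n) v k.
Proof. by apply: eq_bigr => k _; rewrite haar_q_of. Qed.

Section Uniqueness.
Variable q : nat -> nat -> R.
Hypothesis hq : hermitian_hypergroup_deformation q.
Hypothesis q_nn0 : forall n, deform_conv q n n 0%N = (v n)^-1.

Lemma deform_conv_at0 j m : deform_conv q j m 0%N = dirac R m j / v m.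
Proof.
case: (eqVneq j m) => [->|jm]; first by rewrite q_nn0 /dirac eqxx mul1r.
rewrite deform_conv_neq // /dirac (_ : (0 == maxn j m) = false); last by lia.
by rewrite (negbTE jm) mul0r.
Qed.

Lemma q_off_diagE n k : (0 < n)%N -> k != n -> q n k = q_of n k.
Proof.
move=> n_gt0 kn; case: hq => _ [q_prob [q_assoc _]].
have [_ [N1 [qN1 _]]] := q_prob n n.
set N := maxn N1 (maxn n k).+1.
have nnN j : (N <= j)%N -> deform_conv q n n j = 0 by move=> jN; apply: qN1; lia.
have nkN j : (N <= j)%N -> deform_conv q n k j = 0.
  by move=> jN; rewrite deform_conv_neq 1?eq_sym // /dirac (_ : (j == _) = false) //; lia.
(* (δ_n * δ_n) * δ_k = δ_n * (δ_n * δ_k), evaluated at 0 *)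
have := q_assoc n n k N (fun j jN => conj (nnN j jN) (nkN j jN)) 0%N.
under eq_bigr do rewrite deform_conv_at0 mulrCA.
rewrite (@sum_dirac_mul _ (fun j => deform_conv q n n j / v k)); last by lia.
rewrite (sum_deform_conv_neq (deform_conv q n ^~ 0%N)) 1?eq_sym //.
rewrite deform_conv_diag // deform_conv_at0 /dirac.
have vk := v_neq0 k.
move/(congr1 ( *%R^~ (v k))); rewrite divfK //.
case: (ltngtP k n) kn => // [kn|nk] _.
- by rewrite q_of_lt // eqxx mul1r mulrC.
- by rewrite q_of_gt // ltn_eqF // !mul0r.
Qed.

Lemma q_diagE n : (0 < n)%N -> q n n = q_of n n.
Proof.
move=> n_gt0; case: hq => _ [q_prob _].
have [_ [N1 [qN1]]] := q_prob n n; rewrite deform_conv_diag // in qN1 *.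
rewrite (@sum_ord_vanishing _ _ n.+1) // => [|j]; last first.
  by move=> nj; rewrite q_off_diagE ?q_of_gt // gtn_eqF.
rewrite -(sum_q_of n) !big_ord_recr /=.
rewrite (eq_bigr (fun j : 'I_n => q_of n j)) => [/addrI //|j _].
by rewrite q_off_diagE // ltn_eqF.
Qed.

Lemma deform_conv_unique m n : deform_conv q m n = deform_conv q_of m n.
Proof.
case: (eqVneq m n) => [<-|mn]; last by rewrite !deform_conv_neq.
case: m => [|m]; first by rewrite /deform_conv.
rewrite !deform_conv_diag //; apply: boolp.funext => k.
by case: (eqVneq k m.+1) => [->|km]; [apply: q_diagE | apply: q_off_diagE].
Qed.

End Uniqueness.

End SquareMeasure.

Theorem corollary3p4 (R : realType) (v : nat -> R) (hv : in_V v) :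
  exists q : nat -> nat -> R,
    hermitian_hypergroup_deformation q /\
        (forall n, deform_conv q n n 0%N = (v n)^-1) /\
        (* uniqueness *)
        (forall q' : nat -> nat -> R,
            hermitian_hypergroup_deformation q' ->
            (forall n, deform_conv q' n n 0%N = (v n)^-1) ->
            forall m n, deform_conv q' m n = deform_conv q m n) /\
        (* (i) *)
        (forall n, haar q n = v n) /\
        (forall n, (0 < n)%N -> haar q n - haarL q n = u_of v n) /\
        (* (ii) *)
        (forall n, (0 < n)%N -> haarL q n <= haar q n) /\
        (* (iii) *)
        (forall n, (0 < n)%N ->
           [/\ forall m, (m < n)%N -> deform_conv q n n m = haar q m / haar q n,
               deform_conv q n n n = (haar q n - haarL q n) / haar q n &
               forall m, (n < m)%N -> deform_conv q n n m = 0]) /\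
        (* (iv) *)
        (forall n, (0 < n)%N ->
           (haar q n = haarL q n -> spt (deform_conv q n n) =i [pred k | (k < n)%N]) /\
           (haarL q n < haar q n -> spt (deform_conv q n n) =i [pred k | (k <= n)%N])).
Proof.
have [haar_v haarL_v] := (haar_q_of hv, haarL_q_of hv).
exists (q_of v); split; first exact: q_of_hypergroup.
split; first exact: deform_conv_q_of_nn0.
split; first by move=> q hq q_nn0 m n; apply: deform_conv_unique.
split; first exact: haar_v.
split; first by move=> n _; rewrite haar_v haarL_v.
split; first by move=> n n_gt0; rewrite haar_v haarL_v; case: hv => _ _; apply.
split=> n _; rewrite (deform_conv_q_of_nn hv) haar_v haarL_v.
  split=> [m mn||m nm]; first by rewrite q_of_lt // haar_v.
  - by rewrite q_of_nn.
  - by rewrite q_of_gt.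
split=> [v_eq|v_gt] k; rewrite (spt_q_of hv) !inE /u_of.
- by rewrite v_eq subrr eqxx andbF orbF.
- by rewrite subr_eq0 (gt_eqF v_gt) andbT orbC -leq_eqVlt.
Qed.
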